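(* Let $G$ be a graph on $n$ vertices. Then $\mathcal{P}_2(\mathcal{E}_G)=\emptyset$ if and only if $G$ is a disjoint union of complete graphs.
   Context: Work over an algebraically closed field $k$. The Fomin–Kirillov algebra $\mathcal{E}_n$ is the graded $k$-algebra generated by degree-$1$ elements $x_{ij}$, $1\leq i<j\leq n$, subject to: $x_{ij}^2=0$; $x_{ij}x_{kl}=x_{kl}x_{ij}$ whenever $\{i,j\}\cap\{k,l\}=\emptyset$; $x_{ij}x_{jk}-x_{jk}x_{ik}-x_{ik}x_{ij}=0$ and $x_{jk}x_{ij}-x_{ik}x_{jk}-x_{ij}x_{ik}=0$ for $i<j<k$. For a graph $G$ on vertex set $\{1,\dots,n\}$, $\mathcal{E}_G$ is the subalgebra of $\mathcal{E}_n$ generated by the $x_{ij}$ with $\{i,j\}$ an edge of $G$. A degree-$2$ truncated point module over a connected graded algebra $A$ generated in degree $1$ is a graded cyclic module generated in degree $0$ with Hilbert series $1+t+t^2$; $\mathcal{P}_2(A)$ is the space of such modules. *)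

From HB Require Import structures.
From mathcomp Require Import all_boot all_order all_algebra.
Set Implicit Arguments. Unset Strict Implicit. Unset Printing Implicit Defensive.
Import Order.TTheory GRing.Theory Num.Theory.
Local Open Scope ring_scope.

(* Vertices are 'I_n.  A generator x_{ij} (i<j) of the Fomin--Kirillov
   algebra E_n is indexed by the pair (i,j) : 'I_n * 'I_n; pairs with
   i >= j are unused indices. *)
Notation pr n := ('I_n * 'I_n)%type.

(* Degree-2 part of the tensor algebra T(V): coefficient functions on pairs
   of generator indices; (a,b) stands for the word x_a x_b. *)
Notation T2 k n := {ffun (pr n * pr n) -> k}.

Definition xx (k : fieldType) n (a b : pr n) : T2 k n :=
  [ffun p => ((p == (a, b)) : nat)%:R].

Notation rel_idx n :=
  ((pr n + (pr n * pr n)) + (('I_n * 'I_n * 'I_n) + ('I_n * 'I_n * 'I_n)))%type.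

Definition FKrel (k : fieldType) n (l : rel_idx n) : T2 k n :=
  match l with
  | inl (inl (i, j)) => if (i < j)%N then @xx k n (i, j) (i, j) else 0
  | inl (inr ((i, j), (p, q))) =>
      if [&& (i < j)%N, (p < q)%N, i != p, i != q, j != p & j != q]
      then @xx k n (i, j) (p, q) - @xx k n (p, q) (i, j) else 0
  | inr (inl (i, j, m)) =>
      if (i < j)%N && (j < m)%N
      then @xx k n (i, j) (j, m) - @xx k n (j, m) (i, m) - @xx k n (i, m) (i, j) else 0
  | inr (inr (i, j, m)) =>
      if (i < j)%N && (j < m)%N
      then @xx k n (j, m) (i, j) - @xx k n (i, m) (j, m) - @xx k n (i, j) (i, m) else 0
  end.

(* Degree-2 component of the two-sided ideal of relations of E_n: since the
   relations are quadratic, it is their linear span in T(V)_2. *)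
Definition in_FK_ideal2 (k : fieldType) n (t : T2 k n) : Prop :=
  exists c : rel_idx n -> k, forall p, t p = \sum_(l : rel_idx n) c l * @FKrel k n l p.

Definition edgeb n (G : rel 'I_n) (e : pr n) : bool := (e.1 < e.2)%N && G e.1 e.2.

(* E_G = subalgebra of E_n generated by the x_e, e in G, i.e. T(V_G)/I_G with
   I_G = ker (T(V_G) -> E_n).  Degree-2 component of I_G: tensors in the
   generators of G that vanish in E_n.  (I_G has no degree-1 part, and the
   parts of degree >= 3 act trivially on modules concentrated in degrees
   0,1,2.) *)
Definition in_EG_ideal2 (k : fieldType) n (G : rel 'I_n) (t : T2 k n) : Prop :=
  (forall p : pr n * pr n, t p != 0 -> edgeb G p.1 && edgeb G p.2)
  /\ in_FK_ideal2 t.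

(* A degree-2 truncated point module over E_G: a graded module
   M = M_0 (+) M_1 (+) M_2 with M_i = 'rV[k]_1 (Hilbert series 1+t+t^2,
   M_i = 0 for i >= 3).  Since E_G is generated in degree 1, the module
   structure is given by the actions of the generators x_e (e an edge of G),
   acting on row vectors by right multiplication:
     a0 e : M_0 -> M_1,   a1 e : M_1 -> M_2,
   subject to the relations of E_G (the word x_a x_b acts on M_0 by
   v |-> v *m a0 b *m a1 a).  Cyclic, generated in degree 0:
   M_1 = E_1 M_0 and M_2 = E_1 M_1. *)
Definition is_trunc_point_module2 (k : fieldType) n (G : rel 'I_n)
    (a0 a1 : pr n -> 'M[k]_1) : Prop :=
  [/\ (forall t : T2 k n, in_EG_ideal2 G t ->
         \sum_(p : pr n * pr n) t p *: (a0 p.2 *m a1 p.1) = 0),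
      (1%:M <= \sum_(e | edgeb G e) a0 e)%MS
    & (1%:M <= \sum_(e | edgeb G e) a1 e)%MS].

Definition P2_nonempty (k : fieldType) n (G : rel 'I_n) : Prop :=
  exists a0 a1 : pr n -> 'M[k]_1, is_trunc_point_module2 G a0 a1.

Definition disjoint_union_of_complete n (G : rel 'I_n) : Prop :=
  exists f : 'I_n -> 'I_n, forall i j, G i j = (i != j) && (f i == f j).

From HB Require Import structures.
From mathcomp Require Import all_boot all_order all_algebra.
From mathcomp Require Import zify.
Set Implicit Arguments. Unset Strict Implicit. Unset Printing Implicit Defensive.
Import Order.TTheory GRing.Theory Num.Theory.
Local Open Scope ring_scope.

(* A degree-2 truncated point module has one-dimensional graded pieces, so it is
   given by scalars a0 e, a1 e on the edges e of G: the word x_a x_b acts by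
   a0 b * a1 a, and the module axioms say that this pairing kills the degree-2
   part of the ideal of E_G.  Both three-term relations of E_n on x < y < z are
   triangle relations x_pq x_qr - x_qr x_rp - x_rp x_pq of an oriented triangle
   p -> q -> r, and their words occur in no other relation of E_n.
   If G has an induced path u - v - w, the triangle relation on (u, v, w) ties the
   E_G-word x_uv x_vw to the word x_vw x_wu, which does not lie in E_G; hence the
   indicator of x_uv x_vw is a point module.  If G is a disjoint union of cliques,
   take edges e, f with a1 e <> 0 <> a0 f: the relations x_e^2 = x_f^2 = 0 give
   a0 e = a1 f = 0, and then the commutation relation (e, f disjoint) or the
   triangle relation on the triangle spanned by e and f forces a0 f * a1 e = 0. *)

Lemma sub_ffunE (aT : finType) (R : zmodType) (f g : {ffun aT -> R}) x :
  (f - g) x = f x - g x.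
Proof. by rewrite !ffunE. Qed.

Lemma zero_ffunE (aT : finType) (R : zmodType) x : (0 : {ffun aT -> R}) x = 0.
Proof. by rewrite ffunE. Qed.

Section Cliques.
Variables (n : nat) (G : rel 'I_n).
Hypotheses (sG : symmetric G) (iG : irreflexive G).

Lemma adj_neq p q : G p q -> p != q.
Proof. by apply: contraTneq => ->; rewrite iG. Qed.

Definition no_induced_P3 : Prop := forall u v w, G u v -> G v w -> u != w -> G u w.

Lemma disjoint_union_of_completeP : disjoint_union_of_complete G <-> no_induced_P3.
Proof.
split=> [[f adjE] u v w|P3].
  by rewrite !adjE => /andP[_ /eqP->] /andP[_ /eqP->] ->; rewrite eqxx.
pose N i j := (j == i) || G i j.
have N_adj i j : G i j -> N i =1 N j.
  move=> Gij x; rewrite /N.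
  have [-> | xi] := eqVneq x i; first by rewrite sG Gij orbT.
  have [-> | xj] := eqVneq x j; first by rewrite Gij orbT.
  apply/idP/idP=> [Gix|Gjx].
    by apply: (P3 j i x) => //; rewrite 1?sG // eq_sym.
  by apply: (P3 i j x) => //; rewrite eq_sym.
pose f i := odflt i [pick j | N i j].
have N_f i : N i (f i) by rewrite /f; case: pickP => [//|/(_ i)]; rewrite /N eqxx.
have f_adj i j : G i j -> f i = f j.
  move=> Gij; rewrite /f (eq_pick (N_adj i j Gij)).
  by case: pickP => // /(_ j); rewrite /N eqxx.
exists f => i j; apply/idP/andP=> [Gij|[ij /eqP fij]].
  by rewrite (adj_neq Gij) (f_adj i j Gij).
have := N_f i; have := N_f j; rewrite /N -fij.
case/orP=> [/eqP fj|Gjf] /orP[/eqP fi|Gif].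
- by move: ij; rewrite -{1}fi fj eqxx.
- by rewrite -fj.
- by rewrite sG -fi.
- by apply: P3 Gif _ ij; rewrite sG.
Qed.

End Cliques.

Section TriangleRelations.
Variables (k : fieldType) (n : nat).
Implicit Types (p q r x y z : 'I_n) (e f : pr n) (w : pr n * pr n) (l : rel_idx n).

Lemma xxE e f w : xx k e f w = (w == (e, f) : nat)%:R.
Proof. by rewrite ffunE. Qed.

Definition epair p q : pr n := if (p < q)%N then (p, q) else (q, p).

Lemma epair_lt p q : (p < q)%N -> epair p q = (p, q).
Proof. by rewrite /epair => ->. Qed.

Lemma epairC p q : epair p q = epair q p.
Proof. by rewrite /epair; case: ltngtP => // /val_inj->. Qed.

Lemma epair_shared p q r : epair p q = epair q r -> p = r.
Proof. by rewrite /epair; do 2 case: ltnP => _; case=> ->. Qed.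

Lemma incr_pair_cases e f : (e.1 < e.2)%N -> (f.1 < f.2)%N -> e != f ->
  [/\ e.1 != f.1, e.1 != f.2, e.2 != f.1 & e.2 != f.2]
  \/ exists p q r, [/\ r != p, e = epair p q & f = epair q r].
Proof.
case: e f => [i j] [p q] /= lt_ij lt_pq ne.
have [ip|ip] := eqVneq i p.
  subst p; right; exists j, i, q; rewrite epairC !epair_lt //; split=> //.
  by apply: contraNneq ne => ->.
have [iq|iq] := eqVneq i q.
  subst q; right; exists j, i, p; rewrite epairC [epair i p]epairC !epair_lt //.
  by split=> //; rewrite neq_ltn (ltn_trans lt_pq lt_ij).
have [jp|jp] := eqVneq j p.
  subst p; right; exists i, j, q; rewrite !epair_lt //.
  by split=> //; rewrite neq_ltn (ltn_trans lt_ij lt_pq) orbT.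
have [jq|jq] := eqVneq j q; last by left.
subst q; right; exists i, j, p; rewrite [epair j p]epairC !epair_lt //; split=> //.
by apply: contraNneq ne => ->.
Qed.

Definition tri_word p q r : pr n * pr n := (epair p q, epair q r).

Definition tri_words p q r w : bool :=
  [|| w == tri_word p q r, w == tri_word q r p | w == tri_word r p q].

Definition tri_rel p q r : T2 k n :=
  xx k (epair p q) (epair q r) - xx k (epair q r) (epair r p)
  - xx k (epair r p) (epair p q).

Lemma tri_wordsC p q r : tri_words q r p =1 tri_words p q r.
Proof. by move=> w; rewrite /tri_words orbA orbC. Qed.

Lemma FKrel_R1 x y z :
  (x < y < z)%N -> FKrel k (inr (inl (x, y, z))) = tri_rel x y z.
Proof.
case/andP=> xy yz; have xz := ltn_trans xy yz.
by rewrite /FKrel xy yz /tri_rel (epairC z x) (epair_lt xy) (epair_lt yz) (epair_lt xz).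
Qed.

Lemma FKrel_R2 x y z :
  (x < y < z)%N -> FKrel k (inr (inr (x, y, z))) = tri_rel z y x.
Proof.
case/andP=> xy yz; have xz := ltn_trans xy yz.
rewrite /FKrel xy yz /tri_rel (epairC z y) (epairC y x).
by rewrite (epair_lt xy) (epair_lt yz) (epair_lt xz) addrAC.
Qed.

Ltac words_differ :=
  repeat match goal with |- context [nat_of_bool ?B] =>
    lazymatch B with false => fail | true => fail | _ => idtac end;
    rewrite (_ : B = false); last by lia
  end.

Lemma FKrel_tri_words_unique x y z l w : (x < y < z)%N ->
  (l != inr (inl (x, y, z)) -> tri_words x y z w -> FKrel k l w = 0) /\
  (l != inr (inr (x, y, z)) -> tri_words z y x w -> FKrel k l w = 0).
Proof.
case/andP=> xy yz; have xz := ltn_trans xy yz.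
rewrite /tri_words /tri_word (epairC z x) (epairC z y) (epairC y x).
rewrite (epair_lt xy) (epair_lt yz) (epair_lt xz).
case: l => [[[i j]|[[i j] [p q]]]|[[[i j] m]|[[i j] m]]];
  rewrite /FKrel; (case: ifP => [cond|_]; last by rewrite zero_ffunE);
  [rewrite xxE | rewrite sub_ffunE !xxE | rewrite 2!sub_ffunE !xxE | rewrite 2!sub_ffunE !xxE].
all: split=> ne /or3P[] /eqP-> {w}.
all: move: ne cond; rewrite ?(inj_eq inr_inj) ?(inj_eq inl_inj) !xpair_eqE -!val_eqE /= => ne cond.
all: words_differ.
all: by rewrite ?subr0.
Qed.

Lemma triangle_relation p q r : p != q -> q != r -> r != p ->
  exists l0, [\/ FKrel k l0 = tri_rel p q r, FKrel k l0 = tri_rel q r p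
                | FKrel k l0 = tri_rel r p q]
    /\ forall l w, l != l0 -> tri_words p q r w -> FKrel k l w = 0.
Proof.
wlog: p q r / (p < q)%N && (p < r)%N => [wlog_min pq qr rp|/andP[lt_pq lt_pr] _ qr _].
  have /or3P[p_min|q_min|r_min] : [|| (p < q)%N && (p < r)%N,
                                    (q < r)%N && (q < p)%N | (r < p)%N && (r < q)%N].
    by move: pq qr rp; rewrite -!val_eqE /=; lia.
  - exact: wlog_min p q r p_min pq qr rp.
  - have [l0 [rel0 uniq0]] := wlog_min q r p q_min qr rp pq.
    exists l0; split=> [|l w ne]; last by rewrite -tri_wordsC; apply: uniq0.
    by case: rel0 => ?; [apply: Or32 | apply: Or33 | apply: Or31].
  - have [l0 [rel0 uniq0]] := wlog_min r p q r_min rp pq qr.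
    exists l0; split=> [|l w ne]; last by rewrite -2!tri_wordsC; apply: uniq0.
    by case: rel0 => ?; [apply: Or33 | apply: Or31 | apply: Or32].
have [qr'|rq|/val_inj eq_qr] := ltngtP q r; last by rewrite eq_qr eqxx in qr.
- have pqr : (p < q < r)%N by rewrite lt_pq.
  exists (inr (inl (p, q, r))); split; first by apply: Or31; rewrite FKrel_R1.
  by move=> l w; apply: (FKrel_tri_words_unique l w pqr).1.
- have prq : (p < r < q)%N by rewrite lt_pr.
  exists (inr (inr (p, r, q))); split; first by apply: Or32; rewrite FKrel_R2.
  by move=> l w ne; rewrite -tri_wordsC; apply: (FKrel_tri_words_unique l w prq).2.
Qed.

Lemma tri_rel_support p q r w : tri_rel p q r w != 0 -> tri_words p q r w.
Proof.
rewrite /tri_rel 2!sub_ffunE !xxE; apply: contraR.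
by rewrite !negb_or => /and3P[/negbTE-> /negbTE-> /negbTE->]; rewrite !subr0.
Qed.

Lemma tri_rel_words_neq0 p q r w : p != q -> q != r -> r != p ->
  tri_words p q r w -> tri_rel p q r w != 0.
Proof.
move=> pq qr rp.
have d12 : (tri_word p q r == tri_word q r p) = false.
  by apply/eqP=> -[/epair_shared eq_ends _]; rewrite eq_ends eqxx in rp.
have d23 : (tri_word q r p == tri_word r p q) = false.
  by apply/eqP=> -[/epair_shared eq_ends _]; rewrite eq_ends eqxx in pq.
have d31 : (tri_word r p q == tri_word p q r) = false.
  by apply/eqP=> -[/epair_shared eq_ends _]; rewrite eq_ends eqxx in qr.
rewrite /tri_rel 2!sub_ffunE !xxE -![(_, _)]/(tri_word _ _ _).
case/or3P=> /eqP->; rewrite eqxx.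
- by rewrite d12 [_ == tri_word r p q]eq_sym d31 !subr0 oner_eq0.
- by rewrite [_ == tri_word p q r]eq_sym d12 d23 sub0r subr0 oppr_eq0 oner_eq0.
- by rewrite d31 [_ == tri_word q r p]eq_sym d23 subrr sub0r oppr_eq0 oner_eq0.
Qed.

End TriangleRelations.

Lemma sub1mx_sumsmx (k : fieldType) (I : finType) (P : pred I)
    (A : I -> 'M[k]_1) :
  (1%:M <= \sum_(i | P i) A i)%MS <-> exists2 i, P i & A i != 0.
Proof.
have full1 (S : 'M[k]_1) : (1%:M <= S)%MS = (S != 0).
  rewrite sub1mx /row_full -mxrank_eq0.
  by have := rank_leq_row S; case: (\rank S) => [|[]].
rewrite full1 -submx0; split=> [S_neq0|[i Pi Ai_neq0]].
  have /existsP[i /andP[Pi Ai]] : [exists i, P i && (A i != 0)].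
    apply: contraR S_neq0 => /existsPn none; apply/sumsmx_subP => i Pi.
    by have := none i; rewrite Pi negbK submx0.
  by exists i.
by apply: contraNN Ai_neq0 => /sumsmx_subP/(_ i Pi); rewrite submx0.
Qed.

Lemma mx11_eq0 (k : fieldType) (A : 'M[k]_1) : (A == 0) = (A 0 0 == 0).
Proof.
apply/eqP/eqP=> [->|A00]; first by rewrite mxE.
by rewrite [A]mx11_scalar A00 raddf0.
Qed.

Section ScalarPointModules.
Variables (k : fieldType) (n : nat) (G : rel 'I_n).
Implicit Types (e : pr n) (w : pr n * pr n) (t : T2 k n).

Definition word_value (a0 a1 : pr n -> k) w : k := a0 w.2 * a1 w.1.

Definition eval2 (a0 a1 : pr n -> k) t : k := \sum_w t w * word_value a0 a1 w.

Definition scalar_point_module (a0 a1 : pr n -> k) : Prop :=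
  [/\ forall t, in_EG_ideal2 G t -> eval2 a0 a1 t = 0,
      exists2 e, edgeb G e & a0 e != 0
    & exists2 e, edgeb G e & a1 e != 0].

Lemma eval2_mx11 (A0 A1 : pr n -> 'M[k]_1) t :
  \sum_w t w *: (A0 w.2 *m A1 w.1) =
  (eval2 (fun e => A0 e 0 0) (fun e => A1 e 0 0) t)%:M.
Proof.
rewrite raddf_sum; apply: eq_bigr => w _.
by rewrite [A0 w.2 *m _]mx11_scalar mxE big_ord1 scale_scalar_mx.
Qed.

Lemma point_module_scalar (A0 A1 : pr n -> 'M[k]_1) :
  is_trunc_point_module2 G A0 A1 ->
  scalar_point_module (fun e => A0 e 0 0) (fun e => A1 e 0 0).
Proof.
case=> ann /sub1mx_sumsmx[f Ef A0f] /sub1mx_sumsmx[e Ee A1e].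
split; [move=> t /ann | exists f | exists e]; rewrite -?mx11_eq0 //.
by rewrite eval2_mx11 => /eqP; rewrite mx11_eq0 mxE /= mulr1n => /eqP.
Qed.

Lemma scalar_point_module_mx11 (a0 a1 : pr n -> k) :
  scalar_point_module a0 a1 ->
  is_trunc_point_module2 G (fun e => (a0 e)%:M) (fun e => (a1 e)%:M).
Proof.
case=> ann [f Ef a0f] [e Ee a1e]; split.
- move=> t /ann t0.
  rewrite (eval2_mx11 (fun e => (a0 e)%:M) (fun e => (a1 e)%:M)) -(raddf0 (@scalar_mx k 1)) -t0.
  by congr _%:M; apply: eq_bigr => w _; rewrite /word_value !mxE.
- by apply/sub1mx_sumsmx; exists f; rewrite // mx11_eq0 mxE.
- by apply/sub1mx_sumsmx; exists e; rewrite // mx11_eq0 mxE.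
Qed.

Lemma P2_nonemptyP :
  P2_nonempty k G <-> exists a0 a1, scalar_point_module a0 a1.
Proof.
split=> [[A0 [A1 /point_module_scalar]]|[a0 [a1 /scalar_point_module_mx11]]].
  by exists (fun e => A0 e 0 0), (fun e => A1 e 0 0).
by exists (fun e => (a0 e)%:M), (fun e => (a1 e)%:M).
Qed.

Lemma eval2_indicator (a b : pr n) t :
  eval2 (fun e => (e == b)%:R) (fun e => (e == a)%:R) t = t (a, b).
Proof.
rewrite /eval2 (bigD1 (a, b)) //= big1 => [|[x y]].
  by rewrite /word_value !eqxx /= !mulr1 addr0.
by rewrite xpair_eqE negb_and /word_value => /orP[]/negbTE->; rewrite mulr0n ?mul0r !mulr0.
Qed.

End ScalarPointModules.

Section Annihilators.
Variables (k : fieldType) (n : nat) (G : rel 'I_n).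
Hypotheses (sG : symmetric G) (iG : irreflexive G).
Implicit Types (p q r : 'I_n) (e f : pr n) (w : pr n * pr n) (t : T2 k n) (l : rel_idx n).

Lemma edgeb_epair p q : edgeb G (epair p q) = G p q.
Proof.
rewrite /edgeb /epair.
by case: (ltngtP p q) => [->|->|/val_inj->] //=; rewrite ?sG // ltnn iG.
Qed.

Lemma FKrel_in_EG_ideal2 l :
  (forall w, FKrel k l w != 0 -> edgeb G w.1 && edgeb G w.2) ->
  in_EG_ideal2 G (FKrel k l).
Proof.
move=> supp; split=> //; exists (fun l' => (l' == l)%:R) => w.
rewrite (bigD1 l) //= eqxx mul1r big1 ?addr0 // => l' /negbTE->.
by rewrite mul0r.
Qed.

Variables a0 a1 : pr n -> k.
Hypothesis ann : forall t, in_EG_ideal2 G t -> eval2 a0 a1 t = 0.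

Lemma eval2_xx e f : eval2 a0 a1 (xx k e f) = a0 f * a1 e.
Proof.
rewrite /eval2 (bigD1 (e, f)) //= xxE eqxx mul1r big1 ?addr0 // => w /negbTE ne.
by rewrite xxE ne mul0r.
Qed.

Lemma eval2B t1 t2 : eval2 a0 a1 (t1 - t2) = eval2 a0 a1 t1 - eval2 a0 a1 t2.
Proof. by rewrite /eval2 -sumrB; apply: eq_bigr => w _; rewrite sub_ffunE mulrBl. Qed.

Lemma ann_square e : edgeb G e -> a0 e * a1 e = 0.
Proof.
move=> Ee; have /andP[lt_e _] := Ee.
have rel_e : FKrel k (inl (inl e)) = xx k e e by case: e lt_e {Ee} => i j /= ->.
rewrite -eval2_xx -rel_e; apply/ann/FKrel_in_EG_ideal2 => w.
by rewrite rel_e xxE; case: (w =P (e, e)) => [-> _|_]; rewrite /= ?Ee ?eqxx.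
Qed.

Lemma ann_commute e f : edgeb G e -> edgeb G f ->
  [/\ e.1 != f.1, e.1 != f.2, e.2 != f.1 & e.2 != f.2] ->
  a0 f * a1 e = a0 e * a1 f.
Proof.
move=> Ee Ef [ip iq jp jq].
have rel_ef : FKrel k (inl (inr (e, f))) = xx k e f - xx k f e.
  case: e f Ee Ef ip iq jp jq => [i j] [p q] /andP[/= lt_ij _] /andP[/= lt_pq _].
  by rewrite /FKrel lt_ij lt_pq => /= -> -> -> ->.
apply/eqP; rewrite -subr_eq0 -eval2_xx -eval2_xx -eval2B -rel_ef.
apply/eqP/ann/FKrel_in_EG_ideal2 => w; rewrite rel_ef sub_ffunE !xxE.
case: (w =P (e, f)) => [-> _|_]; first by rewrite /= Ee Ef.
case: (w =P (f, e)) => [-> _|_]; first by rewrite /= Ee Ef.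
by rewrite subrr eqxx.
Qed.

Lemma ann_triangle p q r : G p q -> G q r -> G r p ->
  word_value a0 a1 (tri_word q r p) = 0 -> word_value a0 a1 (tri_word r p q) = 0 ->
  word_value a0 a1 (tri_word p q r) = 0.
Proof.
move=> Gpq Gqr Grp W2 W3.
have [l0 [rel0 _]] := triangle_relation k (adj_neq iG Gpq) (adj_neq iG Gqr) (adj_neq iG Grp).
have G_words w : tri_words p q r w -> edgeb G w.1 && edgeb G w.2.
  by case/or3P=> /eqP-> /=; rewrite !edgeb_epair ?Gpq ?Gqr ?Grp.
have eval_tri x y z : eval2 a0 a1 (tri_rel k x y z) = word_value a0 a1 (tri_word x y z)
    - word_value a0 a1 (tri_word y z x) - word_value a0 a1 (tri_word z x y).
  by rewrite /tri_rel !eval2B !eval2_xx.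
have : eval2 a0 a1 (FKrel k l0) = 0.
  apply/ann/FKrel_in_EG_ideal2 => w.
  by case: rel0 => -> /tri_rel_support; rewrite ?(tri_wordsC q r p) ?(tri_wordsC p q r);
    apply: G_words.
case: rel0 => ->; rewrite eval_tri W2 W3 ?subr0 ?sub0r // => /eqP.
all: by rewrite oppr_eq0 => /eqP.
Qed.

End Annihilators.

Section PointModulesOfGraphs.
Variables (k : fieldType) (n : nat) (G : rel 'I_n).
Hypotheses (sG : symmetric G) (iG : irreflexive G).

Lemma induced_P3_scalar_point_module u v w :
  G u v -> G v w -> u != w -> ~~ G u w ->
  scalar_point_module G (fun e => (e == epair v w)%:R : k) (fun e => (e == epair u v)%:R).
Proof.
move=> Guv Gvw uw nGuw.
have uv := adj_neq iG Guv; have vw := adj_neq iG Gvw; have wu : w != u by rewrite eq_sym.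
have [l0 [rel0 uniq0]] := triangle_relation k uv vw wu.
split; [move=> t [supp [c tc]] | exists (epair v w) | exists (epair u v)];
  rewrite ?edgeb_epair ?eqxx ?oner_eq0 //.
have t_words W : tri_words u v w W -> t W = c l0 * FKrel k l0 W.
  move=> W_tri; rewrite tc (bigD1 l0) //= big1 ?addr0 // => l ne.
  by rewrite uniq0 ?mulr0.
have tW' : t (tri_word v w u) = 0.
  apply/eqP; apply: contraNT nGuw => /supp /andP[_].
  by rewrite /= edgeb_epair // sG.
have FKW' : FKrel k l0 (tri_word v w u) != 0.
  by case: rel0 => ->; apply: tri_rel_words_neq0; rewrite // /tri_words eqxx ?orbT.
have c0 : c l0 = 0.
  move/eqP: tW'; rewrite t_words; last by rewrite /tri_words eqxx orbT.
  by rewrite mulf_eq0 (negbTE FKW') orbF => /eqP.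
rewrite eval2_indicator -[(_, _)]/(tri_word u v w) t_words ?c0 ?mul0r //.
by rewrite /tri_words eqxx.
Qed.

Lemma no_scalar_point_module (a0 a1 : pr n -> k) :
  no_induced_P3 G -> ~ scalar_point_module G a0 a1.
Proof.
move=> P3 [ann [f Ef a0f] [e Ee a1e]].
have a0e : a0 e = 0.
  by have /eqP := ann_square ann Ee; rewrite mulf_eq0 (negbTE a1e) orbF => /eqP.
have a1f : a1 f = 0.
  by have /eqP := ann_square ann Ef; rewrite mulf_eq0 (negbTE a0f) => /eqP.
suff : a0 f * a1 e = 0 by apply/eqP; rewrite mulf_neq0.
have [<-|ef] := eqVneq e f; first by rewrite a0e mul0r.
have [/andP[lt_e _] /andP[lt_f _]] := (Ee, Ef).
case: (incr_pair_cases lt_e lt_f ef) => [disj|[p [q [r [rp e_pq f_qr]]]]].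
  by rewrite (ann_commute ann Ee Ef disj) a0e mul0r.
move: Ee Ef a0e a1f; rewrite e_pq f_qr !edgeb_epair // => Gpq Gqr a0e a1f.
apply: (ann_triangle sG iG ann Gpq Gqr); first by rewrite sG (P3 _ _ _ Gpq Gqr) // eq_sym.
  by rewrite /word_value /= a1f mulr0.
by rewrite /word_value /= a0e mul0r.
Qed.

End PointModulesOfGraphs.

Theorem corollary3p1 (k : closedFieldType) (n : nat) (G : rel 'I_n) :
  symmetric G -> irreflexive G ->
  (~ P2_nonempty k G <-> disjoint_union_of_complete G).
Proof.
move=> sG iG; split=> [noP2 | /(disjoint_union_of_completeP sG iG) P3 /P2_nonemptyP[a0 [a1]]].
  apply/(disjoint_union_of_completeP sG iG) => u v w Guv Gvw uw.
  apply/negPn/negP => nGuw; apply: noP2; apply/P2_nonemptyP.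
  by do 2 eexists; apply: (induced_P3_scalar_point_module k sG iG Guv Gvw uw nGuw).
exact: (no_scalar_point_module sG iG P3).
Qed.
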